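(* Let $\mathcal N$ be a finite network and let $\mathcal I=\mathcal N.\omega$ be the outcome of a run of the reduction process $\omega$. Let $y$ be a node of $\mathcal I$ that is not isolated in $\mathcal I$. Then either (1) there is a chordless cycle $C$ in $\mathcal I$ of length $k\ge 4$ with $y\in C$, or (2) there are chordless cycles $C_1,C_2$ in $\mathcal I$, each of length at least $4$, and nodes $x\in C_1$, $z\in C_2$ such that $y$ lies on a path in $\mathcal I$ from $x$ to $z$.
   Context: A network $\mathcal N=(N,E)$ is a finite simple undirected graph. For a graph $G$ and a set $Y$ of its nodes, the neighborhood is $Y.\eta=\{z\notin Y:\exists y\in Y,\ (y,z)\text{ an edge of }G\}$, the region is $Y.\rho=Y\cup Y.\eta$, and the neighborhood closure is $Y.\varphi=\{z\in Y.\rho:\{z\}.\rho\subseteq Y.\rho\}$ (all computed in $G$). A node $z$ is subsumed by a node $y\neq z$ in $G$ if $\{z\}.\varphi\subseteq\{y\}.\varphi$; equivalently, $z\in\{y\}.\eta$ and $\{z\}.\eta\subseteq\{y\}.\rho$. The reduction process $\omega$: set $G_0=\mathcal N$; as long as the current graph $G_i$ (an induced subgraph of $\mathcal N$) contains distinct nodes $y,z$ with $z$ subsumed by $y$ in $G_i$, choose such a pair and let $G_{i+1}$ be obtained from $G_i$ by deleting $z$ and its incident edges; when no such pair exists, stop. The final graph is denoted $\mathcal N.\omega$. A cycle $\langle y_1,\dots,y_k,y_1\rangle$ is a closed simple path of length $k$; a chord is an edge $(y_i,y_j)$ between two nodes of the cycle that are not consecutive on it; a cycle is chordless if it has no chord.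 *)

(* A network is a finite simple graph: a symmetric,
   irreflexive relation e on a finType T.  Induced subgraphs are given by
   their node sets A : {set T}. *)
From mathcomp Require Import all_boot.
Set Implicit Arguments. Unset Strict Implicit. Unset Printing Implicit Defensive.

Section Net.
Variables (T : finType) (e : rel T).

Definition nbh (A Y : {set T}) : {set T} :=
  [set z in A | (z \notin Y) && [exists y in Y, e y z]].
Definition region (A Y : {set T}) : {set T} := Y :|: nbh A Y.
Definition nclosure (A Y : {set T}) : {set T} :=
  [set z in region A Y | region A [set z] \subset region A Y].

Definition subsumed (A : {set T}) (z y : T) : bool :=
  [&& z \in A, y \in A, z != y &
      nclosure A [set z] \subset nclosure A [set y]].

Definition omega_step (A B : {set T}) : Prop :=
  exists y z, subsumed A z y /\ B = A :\ z.

Inductive omega_reach : {set T} -> {set T} -> Prop :=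
| omega_refl A : omega_reach A A
| omega_next A B C : omega_step A B -> omega_reach B C -> omega_reach A C.

Definition omega_final (A : {set T}) : Prop :=
  forall y z, ~~ subsumed A z y.

Definition omega_outcome (I : {set T}) : Prop :=
  omega_reach [set: T] I /\ omega_final I.

(* c = [y_1; ...; y_k] is a chordless cycle <y_1,...,y_k,y_1> of length k
   in the induced subgraph on A *)
Definition chordless_cycle (A : {set T}) (c : seq T) : Prop :=
  [/\ 3 <= size c, uniq c, all (mem A) c, cycle e c &
      forall (x0 : T) i j, i < size c -> j < size c ->
        e (nth x0 c i) (nth x0 c j) ->
        (j == i.+1 %% size c) || (i == j.+1 %% size c)].

Definition simple_path (A : {set T}) (x : T) (q : seq T) : Prop :=
  [/\ uniq (x :: q), all (mem A) (x :: q) & path e x q].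
End Net.

From mathcomp Require Import all_boot zify.
Set Implicit Arguments. Unset Strict Implicit. Unset Printing Implicit Defensive.

(* If z is not subsumed by a neighbour y, then z has a "private"
      neighbour u: adjacent to z, different from y and not adjacent to y.
      Indeed, otherwise the closed neighbourhood of z is contained in that of
      y, and the neighbourhood closure is monotone in the region.
   2. Induced paths.  At the last node a of an induced path p (predecessor b)
      take a private neighbour u of a with respect to b.  Either u sees no
      other node of p, and p + u is a longer induced path; or, for the last
      node p_i of p (i before b) adjacent to u, the segment p_i ... a closed by
      u is a chordless cycle of length >= 4 through a.
   3. Since induced paths have at most #|I| nodes, growing the edge [y; w] at
      both ends must stop, with each end lying on such a cycle. *)

Section Reduction.
Variables (T : finType) (e : rel T).
Hypotheses (e_sym : symmetric e) (e_irr : irreflexive e).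
Variable A : {set T}.

Lemma in_region1 z w : z \in A ->
  (w \in region e A [set z]) = (w == z) || [&& w \in A, w != z & e z w].
Proof.
move=> zA; rewrite /region /nbh !inE; case: eqP => //= _.
congr (_ && _); apply/existsP/idP => [[y0 /andP[]]|ezw]; rewrite ?inE.
  by move/eqP->.
by exists z; rewrite inE eqxx.
Qed.

Lemma nclosureS Y Y' :
  region e A Y \subset region e A Y' -> nclosure e A Y \subset nclosure e A Y'.
Proof.
move=> sYY'; apply/subsetP=> w /setIdP[wY sw]; apply/setIdP.
by rewrite (subsetP sYY' _ wY) (subset_trans sw sYY').
Qed.

Lemma subsumed_of_region z y : z \in A -> y \in A -> z != y ->
  region e A [set z] \subset region e A [set y] -> subsumed e A z y.
Proof. by move=> zA yA zy /nclosureS sub; rewrite /subsumed zA yA zy sub. Qed.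

Lemma private_neighbour y z : ~~ subsumed e A z y ->
  y \in A -> z \in A -> e y z ->
  exists2 u, u \in A & [&& e z u, u != y & ~~ e y u].
Proof.
move=> nsub yA zA eyz.
have [/existsP[u /and4P[uA ezu uy neyu]]|/existsPn noU] :=
  boolP [exists u, [&& u \in A, e z u, u != y & ~~ e y u]].
  by exists u => //; rewrite ezu uy neyu.
have zy : z != y by apply: contraTneq eyz => ->; rewrite e_irr.
case/negP: nsub; apply: subsumed_of_region => //.
apply/subsetP=> w; rewrite !in_region1 //.
case/orP=> [/eqP->|/and3P[wA wz ezw]]; first by rewrite zA eyz zy orbT.
have := noU w; rewrite wA ezw /= negb_and !negbK.
by case/orP=> [/eqP->|->]; rewrite ?eqxx ?orbT ?andbT //; case: (w == y).
Qed.

Definition induced_path (p : seq T) : Prop :=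
  [/\ uniq p, all (mem A) p &
      forall x0 i j, i < size p -> j < size p ->
        e (nth x0 p i) (nth x0 p j) = (j == i.+1) || (i == j.+1)].

Lemma induced_path_rev p : induced_path p -> induced_path (rev p).
Proof.
case=> up Ap adj; split; rewrite ?rev_uniq ?all_rev // => x0 i j.
rewrite size_rev => ilt jlt; rewrite !nth_rev // adj; [lia|lia|lia].
Qed.

Lemma induced_path_drop p k : induced_path p -> induced_path (drop k p).
Proof.
case=> up Ap adj; split; first exact: drop_uniq.
  by apply/allP=> v /mem_drop; apply: (allP Ap).
move=> x0 i j; rewrite size_drop => ilt jlt.
by rewrite !nth_drop adj -?addnS ?eqn_add2l //; lia.
Qed.

Lemma induced_path_size p : induced_path p -> size p <= #|A|.
Proof.
case=> up Ap _; rewrite cardE; apply: uniq_leq_size => // v vp.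
by rewrite mem_enum; apply: (allP Ap).
Qed.

Lemma induced_path_simple x q : induced_path (x :: q) -> simple_path e A x q.
Proof.
case=> up Ap adj; split=> //; apply/(pathP x) => k klt.
by rewrite -[nth x q k]/(nth x (x :: q) k.+1) adj /= ?eqxx //; lia.
Qed.

Lemma induced_path_edge y w : y \in A -> w \in A -> e y w -> induced_path [:: y; w].
Proof.
move=> yA wA eyw; have yw : y != w by apply: contraTneq eyw => ->; rewrite e_irr.
split; first by rewrite /= inE yw.
  by rewrite /= yA wA.
by move=> x0 [|[|i]] [|[|j]] //= _ _; rewrite ?e_irr // e_sym.
Qed.

Lemma induced_path_rcons p u : induced_path p -> u \in A -> u \notin p ->
  (forall x0 k, k < size p -> e (nth x0 p k) u = (k == (size p).-1)) ->
  induced_path (rcons p u).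
Proof.
case=> up Ap adj uA unp adjU; split; first by rewrite rcons_uniq unp.
  by rewrite all_rcons Ap andbT.
move=> x0; rewrite size_rcons.
suff adj_le i j : i <= j -> j < (size p).+1 ->
    e (nth x0 (rcons p u) i) (nth x0 (rcons p u) j) = (j == i.+1) || (i == j.+1).
  move=> i j ilt jlt; have [ij|ji] := leqP i j; first exact: adj_le.
  by rewrite e_sym orbC adj_le // ltnW.
move=> ij jlt; rewrite !nth_rcons.
have [jp|jp] := ltnP j (size p).
  by rewrite (leq_ltn_trans ij jp) adj //; lia.
have [ip|ip] := ltnP i (size p).
  by rewrite ifT ?adjU; [apply/idP/idP; lia|lia|lia].
by rewrite !ifT ?e_irr; [apply/esym/idP/idP; lia|lia|lia].
Qed.

Lemma chordless_rcons q u : induced_path q -> 3 <= size q -> u \in A -> u \notin q ->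
  (forall x0 k, k < size q -> e (nth x0 q k) u = (k == 0) || (k == (size q).-1)) ->
  chordless_cycle e A (rcons q u).
Proof.
move=> iq q3 uA unq adjU; have [up Ap adj] := iq.
split; first by rewrite size_rcons; lia.
- by rewrite rcons_uniq unq.
- by rewrite all_rcons Ap andbT.
- case: q q3 iq unq adjU {up Ap adj} => [//|x q'] _ iq _ adjU.
  have [_ _ pq'] := induced_path_simple iq.
  have e_first : e x u by rewrite -[x]/(nth x (x :: q') 0) adjU.
  have e_last : e (last x q') u.
    by rewrite -[last x q'](nth_last x (x :: q')) adjU //= eqxx orbT.
  by rewrite /= rcons_path rcons_path pq' /= last_rcons e_last e_sym e_first.
move=> x0; rewrite size_rcons.
suff adj_le i j : i <= j -> j < (size q).+1 ->
    e (nth x0 (rcons q u) i) (nth x0 (rcons q u) j) ->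
    (j == i.+1 %% (size q).+1) || (i == j.+1 %% (size q).+1).
  move=> i j ilt jlt; have [ij|ji] := leqP i j; first exact: adj_le.
  by rewrite e_sym orbC; apply: adj_le => //; rewrite ltnW.
move=> ij jlt; rewrite !nth_rcons.
have [jq|jq] := ltnP j (size q).
  by rewrite (leq_ltn_trans ij jq) adj; [rewrite !modn_small; lia|lia|lia].
have -> : j = size q by lia.
rewrite eqxx modnn; have [iq'|iq'] := ltnP i (size q).
  by rewrite adjU // modn_small; lia.
have -> : i = size q by lia.
by rewrite eqxx e_irr.
Qed.

Lemma extend_or_close p n u x0 : induced_path p -> size p = n.+1 -> 0 < n ->
    u \in A -> u \notin p -> e (nth x0 p n) u -> ~~ e (nth x0 p n.-1) u ->
  induced_path (rcons p u) \/
  exists2 c, chordless_cycle e A c /\ 4 <= size c & nth x0 p n \in c.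
Proof.
move=> ip sp n0 uA unp e_last ne_prev.
have nthD x1 k : k < size p -> nth x1 p k = nth x0 p k by apply: set_nth_default.
case: (boolP [exists k : 'I_n.-1, e (nth x0 p k) u]) => [chord|/existsPn no_chord].
  have ex_chord : exists k, (k < n.-1) && e (nth x0 p k) u.
    by case/existsP: chord => k ek; exists k; rewrite ltn_ord.
  have [|i /andP[ilt eiu] imax] := ex_maxnP ex_chord (m := n).
    by move=> k /andP[klt _]; lia.
  right; exists (rcons (drop i p) u); last first.
    have -> : nth x0 p n = nth x0 (drop i p) (n - i).
      by rewrite nth_drop subnKC //; lia.
    by rewrite mem_rcons inE mem_nth ?orbT // size_drop sp; lia.
  rewrite size_rcons size_drop; split; last lia.
  apply: chordless_rcons; rewrite ?size_drop //; first exact: induced_path_drop.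
  - lia.
  - by apply: contra unp; apply: mem_drop.
  move=> x1 k; rewrite sp => klt; rewrite nth_drop nthD; last by rewrite sp; lia.
  have [->|k0] := eqVneq k 0; first by rewrite addn0 eiu.
  have [ikn|ikn] := eqVneq (i + k) n; first by rewrite ikn e_last; apply/esym/eqP; lia.
  rewrite (_ : k == _ = false); last by apply/eqP; lia.
  have [ikn1|ikn1] := eqVneq (i + k) n.-1; first by rewrite ikn1 (negbTE ne_prev).
  apply/negbTE/negP => eiku; have := imax (i + k); rewrite eiku andbT; lia.
left; apply: induced_path_rcons => // x1 k klt; rewrite nthD // sp /=.
have [->|kn] := eqVneq k n; first by rewrite e_last.
have [->|kn1] := eqVneq k n.-1; first exact/negbTE.
by apply/negbTE; have := no_chord (Ordinal (_ : k < n.-1)); apply; lia.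
Qed.

Definition joins_long_holes (p : seq T) : Prop :=
  exists (c1 c2 : seq T) (x : T) (q : seq T),
    [/\ chordless_cycle e A c1 /\ 4 <= size c1,
        chordless_cycle e A c2 /\ 4 <= size c2,
        x \in c1 /\ last x q \in c2, induced_path (x :: q) & {subset p <= x :: q}].

Hypothesis A_final : omega_final e A.

(* In a final graph an induced path either grows at its last node or that node
   lies on a chordless cycle of length >= 4: the private neighbour of the last
   node with respect to its predecessor always exists and is off the path. *)
Lemma grow_or_close p x0 : induced_path p -> 1 < size p ->
  (exists u, induced_path (rcons p u)) \/
  exists2 c, chordless_cycle e A c /\ 4 <= size c & last x0 p \in c.
Proof.
move=> ip p2; have [_ Ap adj] := ip.
have [n sp] : exists n, size p = n.+1 by exists (size p).-1; lia.
have inA k : k <= n -> nth x0 p k \in A.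
  by move=> kn; apply/(allP Ap)/mem_nth; rewrite sp.
have e_prev : e (nth x0 p n.-1) (nth x0 p n) by rewrite adj; rewrite ?sp; lia.
have [u uA /and3P[e_last u_prev ne_prev]] :=
  private_neighbour (A_final _ _) (inA _ (leq_pred n)) (inA _ (leqnn n)) e_prev.
have unp : u \notin p.
  apply/(nthP x0) => -[k]; rewrite sp => klt pk.
  have kn : k = n.-1 by move: e_last; rewrite -pk adj; rewrite ?sp; lia.
  by move: u_prev; rewrite -pk kn eqxx.
rewrite -nth_last sp /=.
have [|ipu|] := extend_or_close ip sp _ uA unp e_last ne_prev; first lia.
  by left; exists u.
by right.
Qed.

(* Step 3: growing at both ends, by induction on #|A| - size p. *)
Lemma induced_path_between_cycles p :
  induced_path p -> 1 < size p -> joins_long_holes p.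
Proof.
have [k] := ubnP (#|A| - size p); elim: k p => // k IH p measure ip p2.
have grown p' : induced_path p' -> size p' = (size p).+1 -> {subset p <= p'} ->
    joins_long_holes p.
  move=> ip' sp' sub; have := induced_path_size ip'; rewrite sp' => p'A.
  have [||c1 [c2 [x [q [? ? ? ? sub']]]]] := IH p' _ ip'; rewrite ?sp'; try lia.
  by exists c1, c2, x, q; split=> // v /sub /sub'.
case: p measure ip p2 grown => [//|x q] measure ip p2 grown.
have [[u ipu]|[c2 cc2 l2]] := grow_or_close x ip p2.
  by apply: (grown _ ipu) => [|v vp]; rewrite ?size_rcons // mem_rcons inE vp orbT.
have rp2 : 1 < size (rev (x :: q)) by rewrite size_rev.
have [[u ipu]|[c1 cc1 l1]] := grow_or_close x (induced_path_rev ip) rp2.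
  apply: (grown (u :: x :: q)) => [|//|v vp]; last by rewrite inE vp orbT.
  by move/induced_path_rev: ipu; rewrite rev_rcons revK.
move: l1; rewrite rev_cons last_rcons => l1.
by exists c1, c2, x, q; split=> //; split.
Qed.

End Reduction.

(* Proposition 4; alternative (2) always holds. *)
Theorem proposition4 (T : finType) (e : rel T)
  (e_sym : symmetric e) (e_irr : irreflexive e)
  (I : {set T}) (HI : omega_outcome e I)
  (y : T) (yI : y \in I) (ynis : exists2 w, w \in I & e y w) :
  (exists c : seq T, [/\ chordless_cycle e I c, 4 <= size c & y \in c])
  \/
  (exists (c1 c2 : seq T) (x z : T) (q : seq T),
     [/\ chordless_cycle e I c1 /\ 4 <= size c1,
         chordless_cycle e I c2 /\ 4 <= size c2,
         x \in c1 /\ z \in c2 &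
         [/\ simple_path e I x q, last x q = z & y \in x :: q]]).
Proof.
right; have [w wI eyw] := ynis.
have ip := induced_path_edge e_sym e_irr yI wI eyw.
have [c1 [c2 [x [q [cc1 cc2 [xc1 zc2] ipq sub]]]]] :=
  induced_path_between_cycles e_sym e_irr HI.2 ip isT.
exists c1, c2, x, (last x q), q; split=> //; split=> //.
  exact: induced_path_simple.
by apply: sub; rewrite inE eqxx.
Qed.
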